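(* For every $h\in\{1,\dots,H-1\}$, the estimates produced by FORC satisfy $$\|\hat d^\pi_h-\bar d^\pi_h\|_1\le\|\hat d^\pi_{h-1}-\bar d^\pi_{h-1}\|_1+2C^{\mathbf x}_{h-1}\|\hat d^D_{h-1}-d^D_{h-1}\|_1+C^{\mathbf x}_{h-1}C^{\mathbf a}_{h-1}\|\hat d^{D,\dagger}_{h-1}-d^{D,\dagger}_{h-1}\|_1+\sqrt2\Big\|\hat w^\pi_h-\mathbf E^{\bar\pi}_{h-1}\Big(d^D_{h-1}\frac{\hat d^\pi_{h-1}\wedge C^{\mathbf x}_{h-1}\hat d^D_{h-1}}{\hat d^D_{h-1}}\Big)\Big\|_{2,d^{D,\dagger}_{h-1}},$$ where $\mathbf E^{\pi}_hd:=(\mathbf P^\pi_hd)/d^{D,\dagger}_h$.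
   Context: Setting: finite-horizon episodic MDP $(\mathcal X,\mathcal A,P,H)$, measurable $\mathcal X$, finite $\mathcal A$, $[H]=\{0,\dots,H-1\}$, known initial distribution $d_0$; $d^\pi_h$ density of $x_h$ under Markov policy $\pi$. Low-rank: $P_h(x'\mid x,a)=\langle\phi^*_h(x,a),\mu^*_h(x')\rangle$, $\phi^*_h,\mu^*_h\in\mathbb R^{\mathsf d}$, $\|\phi^*_h\|_\infty\le1$, $\int\|\mu^*_h\|_1\le B^\mu$; $\mu^*$ known. Notation: $a\wedge b=\min(a,b)$, $0/0:=0$; $(\mathbf P^\pi_hd)(x'):=\iint P_h(x'\mid x,a)\pi_h(a\mid x)d(x)\mathrm dx\,\mathrm da$ for nonnegative $\pi_h$; $\|g\|_{2,\nu}:=(\int g^2\,\mathrm d\nu)^{1/2}$. Offline data: $\mathcal D_h=\{(x_h^{(i)},a_h^{(i)},x_{h+1}^{(i)})\}$, tuples generated by an arbitrary roll-in to $x_h$, then $a_h\sim\pi^D_h(\cdot\mid x_h)$ (known Markov single-step policy), then $x_{h+1}\sim P_h$ (i.i.d. conditionally on earlier data); $d^D_h,d^{D,\dagger}_h$ marginal densities of $x_h,x_{h+1}$ in $\mathcal D_h$. Clipped occupancy: $\bar\pi_h:=\pi_h\wedge C^{\mathbf a}_h\pi^D_h$, $\bar d^\pi_0=d_0$, $\bar d^\pi_h=\mathbf P^{\bar\pi}_{h-1}(\bar d^\pi_{h-1}\wedge C^{\mathbf x}_{h-1}d^D_{h-1})$. Algorithm FORC: with $\mathcal F_h:=\{\langle\mu^*_{h-1},\theta\rangle\in\Delta(\mathcal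 X):\|\theta\|_\infty\le1\}$ and $\mathcal W_h:=\{w=\langle\mu^*_{h-1},\theta^{\rm up}\rangle/\langle\mu^*_{h-1},\theta^{\rm down}\rangle:\|w\|_\infty\le C^{\mathbf x}_{h-1}C^{\mathbf a}_{h-1}\}$, set $\hat d^\pi_0=d_0$; for $h=1,\dots,H$: split $\mathcal D_{h-1}$ randomly into $\mathcal D^{\rm mle}$ ($n_{\rm mle}$) and $\mathcal D^{\rm reg}$ ($n_{\rm reg}$); $\hat d^D_{h-1}\in\arg\max_{f\in\mathcal F_{h-1}}\sum_{\mathcal D^{\rm mle}}\log f(x^{(i)}_{h-1})$, $\hat d^{D,\dagger}_{h-1}\in\arg\max_{f\in\mathcal F_h}\sum_{\mathcal D^{\rm mle}}\log f(x^{(i)}_h)$; $\hat w^\pi_h\in\arg\min_{w\in\mathcal W_h}\frac1{n_{\rm reg}}\sum_{\mathcal D^{\rm reg}}\big(w(x^{(i)}_h)-\tilde w(x^{(i)}_{h-1})\frac{\bar\pi_{h-1}(a^{(i)}_{h-1}\mid x^{(i)}_{h-1})}{\pi^D_{h-1}(a^{(i)}_{h-1}\mid x^{(i)}_{h-1})}\big)^2$ with $\tilde w=(\hat d^\pi_{h-1}\wedge C^{\mathbf x}_{h-1}\hat d^D_{h-1})/\hat d^D_{h-1}$; $\hat d^\pi_h:=\hat w^\pi_h\hat d^{D,\dagger}_{h-1}$. *)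

From mathcomp Require Import all_boot all_order all_algebra.
From mathcomp Require Import all_classical all_reals all_analysis.
Set Implicit Arguments. Unset Strict Implicit. Unset Printing Implicit Defensive.
Import Order.TTheory GRing.Theory Num.Theory.
Local Open Scope classical_set_scope.
Local Open Scope ring_scope.

Section FORCdefs.
Context {dX : measure_display} {X : measurableType dX} {R : realType}.
Context (mu : {measure set X -> \bar R}) (A : finType).

(* Low-rank transition density P_h(x'|x,a) = <phi_h(x,a), mu*_h(x')>. *)
Definition Plr (dd : nat) (phi : nat -> X -> A -> 'I_dd -> R)
  (mus : nat -> X -> 'I_dd -> R) (h : nat) (x : X) (a : A) (x' : X) : R :=
  \sum_(i < dd) phi h x a i * mus h x' i.

Definition lin (dd : nat) (m : X -> 'I_dd -> R) (th : 'I_dd -> R) (x : X) : R :=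
  \sum_(i < dd) m x i * th i.

Definition is_density (f : X -> R) : Prop :=
  measurable_fun setT f /\ (forall x, 0 <= f x) /\
  (\int[mu]_x (f x)%:E = 1)%E.

Definition is_policy (p : X -> A -> R) : Prop :=
  (forall x a, 0 <= p x a) /\ (forall x, \sum_(a : A) p x a = 1) /\
  (forall a, measurable_fun setT (fun x => p x a)).

Definition Pop (P : X -> A -> X -> R) (p : X -> A -> R) (d : X -> R) (x' : X) : R :=
  fine (\int[mu]_x (\sum_(a : A) P x a x' * p x a * d x)%:E).

Definition clipPol (p pD : X -> A -> R) (Ca : R) (x : X) (a : A) : R :=
  Order.min (p x a) (Ca * pD x a).

Fixpoint dbar (P : nat -> X -> A -> X -> R) (pi piD : nat -> X -> A -> R)
  (Cx Ca : nat -> R) (d0 : X -> R) (dD : nat -> X -> R) (h : nat) : X -> R :=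
  match h with
  | 0%N => d0
  | k.+1 => Pop (P k) (clipPol (pi k) (piD k) (Ca k))
              (fun x => Order.min (dbar P pi piD Cx Ca d0 dD k x) (Cx k * dD k x))
  end.

Definition L1 (f : X -> R) : \bar R := \int[mu]_x (`|f x|)%:E.

(* weighted L2 norm ||f||_{2,nu} with d nu = g d mu *)
Definition L2w (g f : X -> R) : \bar R :=
  poweR (\int[mu]_x (f x ^+ 2 * g x)%:E) (2^-1).

(* hypothesis class F_h (mus_prev = mu*_{h-1}) *)
Definition Fcls (dd : nat) (mus_prev : X -> 'I_dd -> R) (f : X -> R) : Prop :=
  (exists th : 'I_dd -> R, (forall i, `|th i| <= 1) /\ f = lin mus_prev th) /\
  is_density f.

Definition Wcls (dd : nat) (mus_prev : X -> 'I_dd -> R) (C : R) (w : X -> R) : Prop :=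
  (exists thu thd : 'I_dd -> R, forall x, w x = lin mus_prev thu x / lin mus_prev thd x) /\
  (forall x, 0 <= w x /\ `|w x| <= C).

(* F_h indexed by h; F_0 (not given a low-rank form in the paper since
   mu*_{-1} does not exist) is read as Delta(X). *)
Definition FclsIdx (dd : nat) (mus : nat -> X -> 'I_dd -> R) (h : nat) (f : X -> R) : Prop :=
  match h with
  | 0%N => is_density f
  | j.+1 => Fcls (mus j) f
  end.

Definition Eop (P : X -> A -> X -> R) (p : X -> A -> R) (dDdag : X -> R)
  (d : X -> R) (x : X) : R := Pop P p d x / dDdag x.

Definition wtil (Cx : R) (dhat dDhat : X -> R) (x : X) : R :=
  Order.min (dhat x) (Cx * dDhat x) / dDhat x.

Definition regLoss (Dreg : seq (X * A * X)) (wt : X -> R) (pbar pD : X -> A -> R)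
  (w : X -> R) : R :=
  (size Dreg)%:R^-1 *
  \sum_(t <- Dreg) (w t.2 - wt t.1.1 * (pbar t.1.1 t.1.2 / pD t.1.1 t.1.2)) ^+ 2.

End FORCdefs.

(* Abbreviate d' := P^piD d^D (the true d^{D,dagger}), q := d^D wtil, m := dbar /\ C^x d^D,
   and let pibar be the clipped policy, so that the next dbar is P^pibar m and
   E^pibar q = P^pibar q / d'.  Pointwise
     what dhat' - P^pibar m = (P^pibar q - P^pibar m) + what (dhat' - d') + (what - E^pibar q) d',
   which holds also where d' = 0 because P^pibar q <= C^x C^a d'.  The middle term is at most
   C^x C^a |dhat' - d'| as 0 <= what <= C^x C^a; the last is bounded in L1 by its L2(d') norm
   (Cauchy-Schwarz, d' having mass at most 1).  For the first, P^pibar is an L1 contraction,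
   pibar being a sub-policy and each P_h(.|x,a) a probability density, and pointwise
   |q - m| <= |dhat - dbar| + 2 C^x |dhat^D - d^D|. *)

From mathcomp Require Import all_boot all_order all_algebra.
From mathcomp Require Import all_classical all_reals all_analysis.
From mathcomp Require Import measurable_realfun ring lra.
Set Implicit Arguments. Unset Strict Implicit. Unset Printing Implicit Defensive.
Import Order.TTheory GRing.Theory Num.Theory.
Local Open Scope classical_set_scope.
Local Open Scope ring_scope.

Lemma measurable_invr (R : realType) : measurable_fun [set: R] (@GRing.inv R).
Proof.
have m0 : measurable [set x : R | x = 0].
  by apply: closed_measurable; exact: closed_eq.
rewrite -(setvU [set x : R | x = 0]); apply/measurable_funU => //.
  exact: measurableC.
split.
  apply: open_continuous_measurable_fun; first exact/closed_openC/closed_eq.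
  by move=> x; rewrite inE /= => /eqP x0; exact: inv_continuous.
move=> _ B mB; have [B0|B0] := pselect (B 0).
  rewrite [X in measurable X](_ : _ = [set x | x = 0]) //.
  by apply/seteqP; split => [x []//|x /= ->]; split => //=; rewrite invr0.
rewrite [X in measurable X](_ : _ = set0) //.
by apply/seteqP; split => [x [/= -> ]|x //]; rewrite invr0.
Qed.

Lemma measurable_funV d (T : measurableType d) (R : realType) (f : T -> R) :
  measurable_fun [set: T] f -> measurable_fun [set: T] (fun x => (f x)^-1).
Proof. exact: measurableT_comp (@measurable_invr R). Qed.

Lemma measurable_fun_dist d (T : measurableType d) (R : realType) (f g : T -> R) :
  measurable_fun [set: T] f -> measurable_fun [set: T] g ->
  measurable_fun [set: T] (fun x => `|f x - g x|).
Proof.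
move=> mf mg; apply: (measurableT_comp (@normr_measurable R setT)).
exact: measurable_funB.
Qed.

Section pointwise.
Variable R : realFieldType.
Implicit Types a b c d e m p w C D : R.

Lemma dist_min a b c d : `|Order.min a b - Order.min c d| <= `|a - c| + `|b - d|.
Proof.
have := ler_norm (a - c); have := ler_norm (c - a).
have := ler_norm (b - d); have := ler_norm (d - b).
rewrite (distrC c a) (distrC d b) ler_norml /Order.min.
by case: ifP => ?; case: ifP => ? *; apply/andP; split; lra.
Qed.

Section clip_ratio.
Variables (C e d : R).
Hypotheses (C0 : 0 <= C) (e0 : 0 <= e) (d0 : 0 <= d).
Let r := Order.min e (C * d) / d.

Lemma clip_ratio_ge0 : 0 <= r.
Proof. by rewrite divr_ge0 // le_min e0 mulr_ge0. Qed.

Lemma clip_ratio_le : r <= C.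
Proof.
rewrite /r; have [->|dn0] := eqVneq d 0; first by rewrite invr0 mulr0.
by rewrite ler_pdivrMr ?lt0r ?dn0 // mulrC ge_min lexx orbT.
Qed.

(* when [d = 0] both sides vanish, as [x / 0 = 0] and [e >= 0] *)
Lemma clip_ratioK : r * d = Order.min e (C * d).
Proof.
rewrite /r; have [->|dn0] := eqVneq d 0; last by rewrite divfK.
by rewrite !mulr0; apply/eqP; rewrite eq_le le_min e0 lexx ge_min lexx orbT.
Qed.

Lemma dist_clip_ratio b D : 0 <= b ->
  `|D * r - Order.min b (C * D)| <= `|e - b| + 2 * C * `|d - D|.
Proof.
move=> b0.
have -> : D * r - Order.min b (C * D)
    = (D - d) * r + (Order.min e (C * d) - Order.min b (C * D)).
  by rewrite -clip_ratioK; ring.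
apply: (le_trans (ler_normD _ _)).
rewrite normrM (ger0_norm clip_ratio_ge0) distrC.
have := ler_wpM2l (normr_ge0 (d - D)) clip_ratio_le.
have := dist_min e (C * d) b (C * D).
by rewrite -mulrBr normrM (ger0_norm C0); lra.
Qed.

End clip_ratio.

Lemma ler_dist_reweight C w a D p m : 0 <= w -> w <= C -> 0 <= D ->
  0 <= p -> p <= C * D ->
  `|w * a - m| <= `|p - m| + C * `|a - D| + `|w - p / D| * D.
Proof.
move=> w0 wC D0 p0 pC.
have pK : p / D * D = p.
  have [D00|Dn0] := eqVneq D 0; last by rewrite divfK.
  by apply/eqP; rewrite D00 mulr0 eq_le p0 -(mulr0 C) -D00 pC.
have -> : w * a - m = (p - m) + w * (a - D) + (w - p / D) * D.
  by rewrite mulrBl pK; ring.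
apply: (le_trans (ler_normD _ _)); rewrite normrM (ger0_norm D0) lerD2r.
apply: (le_trans (ler_normD _ _)); rewrite lerD2l normrM (ger0_norm w0).
exact: ler_wpM2r.
Qed.

End pointwise.

Section integral_bounds.
Context d (T : measurableType d) (R : realType) (mu : {measure set T -> \bar R}).

Lemma integral_EFinD (f g : T -> R) :
  measurable_fun setT f -> measurable_fun setT g ->
  (forall x, 0 <= f x) -> (forall x, 0 <= g x) ->
  (\int[mu]_x (f x + g x)%:E = \int[mu]_x (f x)%:E + \int[mu]_x (g x)%:E)%E.
Proof.
move=> mf mg f0 g0; under eq_integral do rewrite EFinD.
by rewrite ge0_integralD //; do ?[exact/measurable_EFinP | by move=> x _; rewrite lee_fin].
Qed.

Lemma le_integral_EFinD (f g h : T -> R) :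
  measurable_fun setT f -> measurable_fun setT g -> measurable_fun setT h ->
  (forall x, 0 <= f x) -> (forall x, 0 <= g x) -> (forall x, 0 <= h x) ->
  (forall x, f x <= g x + h x) ->
  (\int[mu]_x (f x)%:E <= \int[mu]_x (g x)%:E + \int[mu]_x (h x)%:E)%E.
Proof.
move=> mf mg mh f0 g0 h0 fgh; rewrite -integral_EFinD //.
apply: ge0_le_integral => //; do ?[by move=> x _; rewrite lee_fin | exact/measurable_EFinP].
exact/measurable_EFinP/measurable_funD.
Qed.

Lemma integral_EFinZl (c : R) (f : T -> R) : 0 <= c ->
  measurable_fun setT f -> (forall x, 0 <= f x) ->
  (\int[mu]_x (c * f x)%:E = c%:E * \int[mu]_x (f x)%:E)%E.
Proof.
move=> c0 mf f0; under eq_integral do rewrite EFinM.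
by rewrite ge0_integralZl_EFin //; [move=> x _; rewrite lee_fin | exact/measurable_EFinP].
Qed.

Lemma L1_reweight_le (C : R) (w a D p m : T -> R) : 0 <= C ->
  measurable_fun setT w -> measurable_fun setT a -> measurable_fun setT D ->
  measurable_fun setT p -> measurable_fun setT m ->
  (forall x, 0 <= w x <= C) -> (forall x, 0 <= D x) -> (forall x, 0 <= p x <= C * D x) ->
  (L1 mu (fun x => w x * a x - m x)%R
    <= L1 mu (fun x => p x - m x)%R + C%:E * L1 mu (fun x => a x - D x)%R
       + \int[mu]_x (`|w x - p x / D x| * D x)%:E)%E.
Proof.
move=> C0 mw ma mD mp mm w0C D0 p0C.
have mpm := measurable_fun_dist mp mm; have maD := measurable_fun_dist ma mD.
have mCaD : measurable_fun setT (fun x => C * `|a x - D x|).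
  by apply: measurable_funM => //; exact: measurable_cst.
rewrite /L1 -integral_EFinZl // -integral_EFinD //; last by move=> x; rewrite mulr_ge0.
apply: le_integral_EFinD => //.
- by apply: measurable_fun_dist => //; exact: measurable_funM.
- exact: measurable_funD.
- apply: measurable_funM => //; apply: measurable_fun_dist => //.
  by apply: measurable_funM => //; exact: measurable_funV.
- by move=> x; rewrite addr_ge0 // mulr_ge0.
- by move=> x; rewrite mulr_ge0.
- move=> x; case/andP: (w0C x) => w0 wC; case/andP: (p0C x) => p0 pC.
  exact: ler_dist_reweight.
Qed.

Section cauchy_schwarz.
Variables (g D : T -> R).
Hypotheses (mg : measurable_fun setT g) (mD : measurable_fun setT D).
Hypotheses (D0 : forall x, 0 <= D x) (D1 : (\int[mu]_x (D x)%:E <= 1)%E).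

Let mgD : measurable_fun setT (fun x => `|g x| * D x).
Proof. by apply: measurable_funM => //; exact: measurableT_comp. Qed.

Let mg2D : measurable_fun setT (fun x => g x ^+ 2 * D x).
Proof. by apply: measurable_funM => //; exact: measurable_funX. Qed.

Lemma integral_abs_mul_le_amgm (t : R) : 0 < t ->
  (\int[mu]_x (`|g x| * D x)%:E
    <= ((2 * t)^-1)%:E * \int[mu]_x (g x ^+ 2 * D x)%:E + (t / 2)%:E)%E.
Proof.
move=> t0.
apply: (@le_trans _ _ (\int[mu]_x ((2 * t)^-1 * (g x ^+ 2 * D x))%:E
  + \int[mu]_x (t / 2 * D x)%:E)%E).
  apply: le_integral_EFinD => //.
  - by apply: measurable_funM => //; exact: measurable_cst.
  - by apply: measurable_funM => //; exact: measurable_cst.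
  - by move=> x; rewrite mulr_ge0 ?D0.
  - move=> x; apply: mulr_ge0; last exact: mulr_ge0 (sqr_ge0 _) (D0 x).
    by rewrite invr_ge0; lra.
  - by move=> x; rewrite mulr_ge0 ?D0 //; lra.
  move=> x; rewrite mulrA -mulrDl; apply: ler_wpM2r => //.
  rewrite -real_normK ?num_real //.
  have -> : (2 * t)^-1 * `|g x| ^+ 2 + t / 2
      = `|g x| + (2 * t)^-1 * (`|g x| - t) ^+ 2 :> R by field; lra.
  by rewrite lerDl mulr_ge0 ?invr_ge0 ?sqr_ge0 //; lra.
rewrite !integral_EFinZl //.
- apply: leeD2l; rewrite -[leRHS]mule1; apply: lee_wpmul2l => //.
  by rewrite lee_fin; lra.
- by rewrite invr_ge0; lra.
- by move=> x; rewrite mulr_ge0 ?D0 ?sqr_ge0.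
- by lra.
Qed.

Lemma integral_abs_mul_le_L2w : (\int[mu]_x (`|g x| * D x)%:E <= L2w mu D g)%E.
Proof.
rewrite /L2w.
have [Sfin|] := boolP ((\int[mu]_x (g x ^+ 2 * D x)%:E)%E \is a fin_num); last first.
  rewrite ge0_fin_numE; last by apply: integral_ge0 => x _; rewrite lee_fin mulr_ge0 ?sqr_ge0.
  by rewrite -leNgt leye_eq => /eqP ->; rewrite poweRyr ?leey.
set s := fine (\int[mu]_x (g x ^+ 2 * D x)%:E)%E.
have sE : (\int[mu]_x (g x ^+ 2 * D x)%:E)%E = s%:E by rewrite fineK.
have s0 : 0 <= s.
  by apply: fine_ge0; apply: integral_ge0 => x _; rewrite lee_fin mulr_ge0 ?sqr_ge0.
rewrite sE poweR_EFin powR12_sqrt //; pose r : R := Num.sqrt s; rewrite -/r.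
have rr : r ^+ 2 = s by rewrite sqr_sqrtr.
have r0 : 0 <= r by exact: sqrtr_ge0.
(* AM-GM with t = sqrt s + e; the slack e > 0 covers s = 0 *)
suff le_re (e : R) : 0 < e -> (\int[mu]_x (`|g x| * D x)%:E <= (r + e)%:E)%E.
  by apply/lee_addgt0Pr => e e0; rewrite -EFinD; exact: le_re.
move=> e0; have re0 : 0 < r + e by lra.
apply: le_trans; first exact: (integral_abs_mul_le_amgm re0).
rewrite sE -EFinM -EFinD lee_fin -rr; clear sE Sfin.
have -> : (2 * (r + e))^-1 * r ^+ 2 + (r + e) / 2
    = r + e - e * (2 * r + e) / (2 * (r + e)) :> R by field; lra.
by rewrite lerBlDr lerDl divr_ge0 //; nra.
Qed.

End cauchy_schwarz.
End integral_bounds.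

Section kernel_operator.
Context {dX : measure_display} {X : measurableType dX} {R : realType}.
Variables (mu : {sigma_finite_measure set X -> \bar R}) (A : finType).

Definition subpolicy (p : X -> A -> R) :=
  [/\ forall x a, 0 <= p x a, forall x, \sum_(a : A) p x a <= 1
    & forall a, measurable_fun setT (fun x => p x a)].

Definition nonneg_integrable (d : X -> R) :=
  [/\ forall x, 0 <= d x, measurable_fun setT d & (\int[mu]_x (d x)%:E < +oo)%E].

Lemma subpolicy_le1 p : subpolicy p -> forall x a, p x a <= 1.
Proof.
case=> p0 p1 _ x a; apply: le_trans (p1 x).
by rewrite (bigD1 a) //= lerDl sumr_ge0.
Qed.

Lemma nonneg_integrable_le (d g : X -> R) : nonneg_integrable g ->
  (forall x, 0 <= d x) -> measurable_fun setT d -> (forall x, d x <= g x) ->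
  nonneg_integrable d.
Proof.
case=> g0 mg gfin d0 md dg; split => //; apply: le_lt_trans gfin.
by apply: ge0_le_integral => //; do ?[exact/measurable_EFinP | move=> x _; rewrite lee_fin].
Qed.

Lemma nonneg_integrableZ c d : 0 <= c -> nonneg_integrable d ->
  nonneg_integrable (fun x => c * d x).
Proof.
move=> c0 [d0 md dfin]; split; first by move=> x; rewrite mulr_ge0.
  by apply: measurable_funM => //; exact: measurable_cst.
by rewrite integral_EFinZl // lte_mul_pinfty.
Qed.

Lemma nonneg_integrableD d e : nonneg_integrable d -> nonneg_integrable e ->
  nonneg_integrable (fun x => d x + e x).
Proof.
move=> [d0 md dfin] [e0 me efin]; split; first by move=> x; rewrite addr_ge0.
  exact: measurable_funD.
by rewrite integral_EFinD // lte_add_pinfty.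
Qed.

Lemma nonneg_integrable_dist d1 d2 : nonneg_integrable d1 -> nonneg_integrable d2 ->
  nonneg_integrable (fun x => `|d1 x - d2 x|).
Proof.
move=> hd1 hd2; apply: nonneg_integrable_le (nonneg_integrableD hd1 hd2) _ _ _ => //.
- by apply: measurable_fun_dist; [case: hd1 | case: hd2].
- case: hd1 => d10 _ _; case: hd2 => d20 _ _ x.
  by rewrite -{2}(ger0_norm (d10 x)) -{2}(ger0_norm (d20 x)) ler_normB.
Qed.

Lemma nonneg_integrable_minr b g : nonneg_integrable b -> nonneg_integrable g ->
  nonneg_integrable (fun x => Order.min (b x) (g x)).
Proof.
move=> [b0 mb _] hg; case: (hg) => g0 mg _.
apply: (nonneg_integrable_le hg); last by move=> x; rewrite ge_min lexx orbT.
- by move=> x; rewrite le_min b0 g0.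
- exact: measurable_minr.
Qed.

Lemma nonneg_integrableM (w d : X -> R) (C : R) : 0 <= C -> measurable_fun setT w ->
  (forall x, 0 <= w x <= C) -> nonneg_integrable d -> nonneg_integrable (fun x => w x * d x).
Proof.
move=> C0 mw w0C hd; case: (hd) => d0 md _.
apply: (nonneg_integrable_le (nonneg_integrableZ C0 hd)).
- by move=> x; case/andP: (w0C x) => w0 _; rewrite mulr_ge0.
- exact: measurable_funM.
- by move=> x; case/andP: (w0C x) => _ wC; rewrite ler_wpM2r.
Qed.

Lemma is_density_nonneg_integrable d : is_density mu d -> nonneg_integrable d.
Proof. by case=> md [d0 d1]; split => //; rewrite d1 ltry. Qed.

Lemma is_policy_subpolicy p : is_policy p -> subpolicy p.
Proof. by case=> p0 [p1 mp]; split => // x; rewrite p1. Qed.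

Lemma subpolicy_clipPol p pD C : 0 <= C -> subpolicy p -> subpolicy pD ->
  subpolicy (clipPol p pD C).
Proof.
move=> C0 [p0 p1 mp] [pD0 _ mpD]; split.
- by move=> x a; rewrite le_min p0 mulr_ge0.
- by move=> x; apply: le_trans (p1 x); apply: ler_sum => a _; rewrite ge_min lexx.
- move=> a; apply: measurable_minr (mp a) _.
  by apply: measurable_funM => //; exact: measurable_cst.
Qed.

Lemma measurable_wtil (C : R) (e d : X -> R) : measurable_fun setT e -> measurable_fun setT d ->
  measurable_fun setT (wtil C e d).
Proof.
move=> me md; apply: measurable_funM; last exact: measurable_funV.
by apply: measurable_minr me _; apply: measurable_funM => //; exact: measurable_cst.
Qed.

Lemma L1_clip_ratio_le C e b d D : 0 <= C ->
  nonneg_integrable e -> nonneg_integrable b -> nonneg_integrable d -> nonneg_integrable D ->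
  (L1 mu (fun x => D x * wtil C e d x - Order.min (b x) (C * D x))%R
    <= L1 mu (fun x => e x - b x)%R + (2 * C)%:E * L1 mu (fun x => d x - D x)%R)%E.
Proof.
move=> C0 [e0 me _] [b0 mb _] [d0 md _] [D0 mD _].
rewrite /L1 -integral_EFinZl ?mulr_ge0 //; last exact: measurable_fun_dist.
apply: le_integral_EFinD => //.
- apply: measurable_fun_dist.
    by apply: measurable_funM => //; exact: measurable_wtil.
  by apply: measurable_minr mb _; apply: measurable_funM => //; exact: measurable_cst.
- exact: measurable_fun_dist.
- by apply: measurable_funM; [exact: measurable_cst | exact: measurable_fun_dist].
- by move=> x; rewrite !mulr_ge0.
- by move=> x; exact: dist_clip_ratio.
Qed.

Variable P : X -> A -> X -> R.
Hypothesis P0 : forall x a y, 0 <= P x a y.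
Hypothesis mP : forall a, measurable_fun setT (fun z : X * X => P z.1 a z.2).

(* The bound [P <= S] serves only to make the inner integral of [Pop] finite,
   so that [fine] does not turn it into 0. *)
Variable S : X -> R.
Hypothesis PS : forall x a y, P x a y <= S y.
Hypothesis P1 : forall x a, (\int[mu]_y (P x a y)%:E = 1)%E.

Definition flow (p : X -> A -> R) (d : X -> R) (x y : X) : R :=
  \sum_(a : A) P x a y * p x a * d x.

Section flow.
Variables (p : X -> A -> R) (d : X -> R).
Hypotheses (hp : subpolicy p) (hd : nonneg_integrable d).

Let p0 : forall x a, 0 <= p x a. Proof. by case: hp. Qed.
Let d0 : forall x, 0 <= d x. Proof. by case: hd. Qed.
Let md : measurable_fun setT d. Proof. by case: hd. Qed.

Lemma flow_ge0 x y : 0 <= flow p d x y.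
Proof. by apply: sumr_ge0 => a _; rewrite !mulr_ge0. Qed.

Lemma measurable_flow : measurable_fun setT (fun z : X * X => (flow p d z.1 z.2)%:E).
Proof.
apply/measurable_EFinP; apply: measurable_sum => a.
apply: measurable_funM; first apply: measurable_funM => //.
- by case: hp => _ _ /(_ a) mp; exact: measurableT_comp mp measurable_fst.
- exact: measurableT_comp md measurable_fst.
Qed.

Lemma measurable_flow1 y : measurable_fun setT (fun x => (flow p d x y)%:E).
Proof. exact: measurable_fun_pair1 measurable_flow. Qed.

Lemma Pop_ge0 y : 0 <= Pop mu P p d y.
Proof. by apply/fine_ge0/integral_ge0 => x _; rewrite lee_fin flow_ge0. Qed.

Lemma measurable_Pop : measurable_fun setT (Pop mu P p d).
Proof.
have -> : Pop mu P p d = fine \o fubini_G mu (fun z => (flow p d z.1 z.2)%:E) by [].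
apply: measurableT_comp; first exact: fine_measurable.
by apply: measurable_fun_fubini_tonelli_G measurable_flow _ => z; rewrite lee_fin flow_ge0.
Qed.

Lemma flow_fin_num y : (\int[mu]_x (flow p d x y)%:E)%E \is a fin_num.
Proof.
case: hd => _ _ dfin.
rewrite ge0_fin_numE; last by apply: integral_ge0 => x _; rewrite lee_fin flow_ge0.
have K0 : 0 <= #|A|%:R * S y.
  have [a _|A0] := pickP A; first by rewrite mulr_ge0 // (le_trans (P0 y a y)).
  by rewrite (eq_card0 A0) mul0r.
apply: (@le_lt_trans _ _ (\int[mu]_x (#|A|%:R * S y * d x)%:E)%E).
  apply: ge0_le_integral => //.
  - by move=> x _; rewrite lee_fin flow_ge0.
  - exact: measurable_flow1.
  - by apply/measurable_EFinP; apply: measurable_funM => //; exact: measurable_cst.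
  move=> x _; rewrite lee_fin.
  have -> : #|A|%:R * S y * d x = \sum_(a : A) S y * d x.
    by rewrite sumr_const -[RHS]mulr_natl mulrA.
  apply: ler_sum => a _; rewrite -mulrA; apply: ler_pM; rewrite ?mulr_ge0 //.
  by rewrite ler_piMl // (subpolicy_le1 hp).
by rewrite integral_EFinZl // lte_mul_pinfty.
Qed.

Lemma EFin_Pop y : (Pop mu P p d y)%:E = (\int[mu]_x (flow p d x y)%:E)%E.
Proof. exact/fineK/flow_fin_num. Qed.

Lemma integral_flow x :
  (\int[mu]_y (flow p d x y)%:E = (\sum_(a : A) p x a * d x)%:E)%E.
Proof.
rewrite -sumEFin; under eq_integral do rewrite -sumEFin.
rewrite ge0_integral_sum //; last 2 first.
- move=> a; apply/measurable_EFinP.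
  by do 2 apply: measurable_funM => //; exact: measurable_fun_pair2 (mP a).
- by move=> a y _; rewrite lee_fin !mulr_ge0.
apply: eq_bigr => a _; under eq_integral do rewrite -mulrA mulrC EFinM.
rewrite ge0_integralZl_EFin ?mulr_ge0 ?P1 ?mule1 //.
  by move=> y _; rewrite lee_fin.
by apply/measurable_EFinP; exact: measurable_fun_pair2 (mP a).
Qed.

Lemma integral_Pop :
  (\int[mu]_y (Pop mu P p d y)%:E = \int[mu]_x (\sum_(a : A) p x a * d x)%:E)%E.
Proof.
under eq_integral do rewrite EFin_Pop.
rewrite -(fubini_tonelli _ measurable_flow); last by move=> z; rewrite lee_fin flow_ge0.
by apply: eq_integral => x _; rewrite integral_flow.
Qed.

Lemma integral_Pop_le :
  (\int[mu]_y (Pop mu P p d y)%:E <= \int[mu]_x (d x)%:E)%E.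
Proof.
rewrite integral_Pop; apply: ge0_le_integral => //.
- by move=> x _; rewrite lee_fin sumr_ge0 // => a _; rewrite mulr_ge0.
- by apply/measurable_EFinP; apply: measurable_sum => a; apply: measurable_funM => //; case: hp.
- exact/measurable_EFinP.
move=> x _; rewrite lee_fin -mulr_suml -[leRHS]mul1r ler_wpM2r //.
by case: hp.
Qed.

Lemma nonneg_integrable_Pop : nonneg_integrable (Pop mu P p d).
Proof.
case: hd => _ _ dfin; split; [exact: Pop_ge0 | exact: measurable_Pop |].
exact: le_lt_trans integral_Pop_le dfin.
Qed.

End flow.

Lemma PopD p d e y : subpolicy p -> nonneg_integrable d -> nonneg_integrable e ->
  Pop mu P p (fun x => d x + e x) y = Pop mu P p d y + Pop mu P p e y.
Proof.
move=> hp hd he; apply: EFin_inj.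
rewrite EFinD !EFin_Pop //; last exact: nonneg_integrableD.
rewrite -ge0_integralD //; do ?[exact: measurable_flow1 |
  by move=> x _; rewrite lee_fin flow_ge0].
apply: eq_integral => x _; rewrite -EFinD -big_split /=.
by congr EFin; apply: eq_bigr => a _; rewrite mulrDr.
Qed.

Lemma Pop_le p1 d1 p2 d2 k y :
  subpolicy p1 -> nonneg_integrable d1 -> subpolicy p2 -> nonneg_integrable d2 ->
  0 <= k -> (forall x a, p1 x a * d1 x <= k * (p2 x a * d2 x)) ->
  Pop mu P p1 d1 y <= k * Pop mu P p2 d2 y.
Proof.
move=> hp1 hd1 hp2 hd2 k0 le12.
rewrite -lee_fin EFinM !EFin_Pop // -integral_EFinZl //; first last.
- by move=> x; exact: flow_ge0.
- exact/measurable_EFinP/measurable_flow1.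
apply: ge0_le_integral => //.
- by move=> x _; rewrite lee_fin flow_ge0.
- exact: measurable_flow1.
- apply/measurable_EFinP; apply: measurable_funM; first exact: measurable_cst.
  exact/measurable_EFinP/measurable_flow1.
move=> x _; rewrite lee_fin /flow mulr_sumr; apply: ler_sum => a _.
by rewrite -!mulrA [k * _]mulrCA; apply: ler_wpM2l; [exact: P0 | exact: le12].
Qed.

Lemma Pop_clipPol_le pi piD Ca C d D y : subpolicy pi -> subpolicy piD ->
  0 <= Ca -> 0 <= C -> nonneg_integrable d -> nonneg_integrable D ->
  (forall x, d x <= C * D x) ->
  Pop mu P (clipPol pi piD Ca) d y <= C * Ca * Pop mu P piD D y.
Proof.
move=> hpi hpiD Ca0 C0 hd hD dC; have hpb := subpolicy_clipPol Ca0 hpi hpiD.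
apply: Pop_le => //; first exact: mulr_ge0.
move=> x a; have -> : C * Ca * (piD x a * D x) = Ca * piD x a * (C * D x) by ring.
apply: ler_pM; [by case: hpb | by case: hd | by rewrite ge_min lexx orbT | exact: dC].
Qed.

Lemma dist_Pop_le p d1 d2 y : subpolicy p ->
  nonneg_integrable d1 -> nonneg_integrable d2 ->
  `|Pop mu P p d1 y - Pop mu P p d2 y| <= Pop mu P p (fun x => `|d1 x - d2 x|) y.
Proof.
move=> hp hd1 hd2; set e := fun x => `|d1 x - d2 x|.
have he : nonneg_integrable e by exact: nonneg_integrable_dist.
have le_shift d d' : nonneg_integrable d -> nonneg_integrable d' ->
    (forall x, d x <= d' x + e x) -> Pop mu P p d y <= Pop mu P p d' y + Pop mu P p e y.
  move=> hd hd' dd'; rewrite -PopD // -[leRHS]mul1r.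
  apply: Pop_le => //; first exact: nonneg_integrableD.
  by move=> x a; rewrite mul1r ler_wpM2l //; case: hp.
have := le_shift _ _ hd1 hd2 (fun x => ler_distlDr (lexx _)).
have := le_shift _ _ hd2 hd1 (fun x => ler_distlCDr (lexx _)).
by rewrite ler_norml; lra.
Qed.

Lemma L1_Pop_le p d1 d2 : subpolicy p ->
  nonneg_integrable d1 -> nonneg_integrable d2 ->
  (L1 mu (fun y => Pop mu P p d1 y - Pop mu P p d2 y)%R <= L1 mu (fun x => d1 x - d2 x)%R)%E.
Proof.
move=> hp hd1 hd2; have he := nonneg_integrable_dist hd1 hd2.
apply: le_trans (integral_Pop_le hp he); apply: ge0_le_integral => //.
- by apply/measurable_EFinP; apply: measurable_fun_dist; exact: measurable_Pop.
- exact/measurable_EFinP/measurable_Pop.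
by move=> y _; rewrite lee_fin; exact: dist_Pop_le.
Qed.

Lemma L1_error_step_le (pi piD : X -> A -> R) (Cx Ca : R) (D e b dh Ddh w : X -> R) :
  subpolicy pi -> subpolicy piD -> 0 <= Cx -> 0 <= Ca -> is_density mu D ->
  nonneg_integrable e -> nonneg_integrable b -> nonneg_integrable dh ->
  measurable_fun setT Ddh -> measurable_fun setT w -> (forall x, 0 <= w x <= Cx * Ca) ->
  (L1 mu (fun x => w x * Ddh x
      - Pop mu P (clipPol pi piD Ca) (fun x => Order.min (b x) (Cx * D x)) x)%R
   <= L1 mu (fun x => e x - b x)%R
      + (2 * Cx)%:E * L1 mu (fun x => dh x - D x)%R
      + (Cx * Ca)%:E * L1 mu (fun x => Ddh x - Pop mu P piD D x)%R
      + (Num.sqrt 2)%:E * L2w mu (Pop mu P piD D) (fun x => w x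
          - Eop mu P (clipPol pi piD Ca) (Pop mu P piD D) (fun y => D y * wtil Cx e dh y) x)%R)%E.
Proof.
move=> hpi hpiD Cx0 Ca0 densD he hb hdh mDdh mw w0C.
have hD := is_density_nonneg_integrable densD.
case: (hD) (he) (hdh) => D0 mD _ [e0 me _] [dh0 mdh _].
set pb := clipPol pi piD Ca; set q := fun y => D y * wtil Cx e dh y.
set m := fun x => Order.min (b x) (Cx * D x); set Dd := Pop mu P piD D.
have hpb : subpolicy pb by exact: subpolicy_clipPol.
have hCD := nonneg_integrableZ Cx0 hD.
have qC x : q x <= Cx * D x.
  by rewrite /q mulrC; apply: ler_wpM2r => //; exact: clip_ratio_le.
have hq : nonneg_integrable q.
  apply: (nonneg_integrable_le hCD) qC.
  - by move=> x; rewrite mulr_ge0 ?clip_ratio_ge0.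
  - by apply: measurable_funM => //; exact: measurable_wtil.
have hm : nonneg_integrable m by exact: nonneg_integrable_minr.
have hDd : nonneg_integrable Dd by exact: nonneg_integrable_Pop.
have Dd1 : (\int[mu]_x (Dd x)%:E <= 1)%E.
  by case: densD => _ [_ <-]; exact: integral_Pop_le.
have [Pq0 mPq _] := nonneg_integrable_Pop hpb hq.
have [_ mPm _] := nonneg_integrable_Pop hpb hm.
have [Dd0 mDd _] := hDd.
have PqC x : 0 <= Pop mu P pb q x <= Cx * Ca * Dd x.
  by rewrite Pq0 Pop_clipPol_le.
apply: le_trans (L1_reweight_le mu (mulr_ge0 Cx0 Ca0) mw mDdh mDd mPq mPm w0C Dd0 PqC) _.
apply: leeD; first apply: leeD.
- apply: le_trans (L1_Pop_le hpb hq hm) _; exact: L1_clip_ratio_le.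
- exact: le_refl.
- (* Cauchy-Schwarz gives the constant 1 <= sqrt 2 *)
  apply: le_trans (integral_abs_mul_le_L2w _ _ _ _) _ => //.
    apply: measurable_funB => //; apply: measurable_funM => //; exact: measurable_funV.
  apply: lee_pemull; first exact: poweR_ge0.
  by rewrite lee_fin -{1}sqrtr1 ler_sqrt // ler1n.
Qed.

End kernel_operator.

Section low_rank.
Context {dX : measure_display} {X : measurableType dX} {R : realType}.
Variables (A : finType) (dd : nat).
Variables (phi : nat -> X -> A -> 'I_dd -> R) (mus : nat -> X -> 'I_dd -> R).
Hypothesis mphi : forall h a i, measurable_fun setT (fun x => phi h x a i).
Hypothesis mmus : forall h i, measurable_fun setT (fun x => mus h x i).
Hypothesis phi1 : forall h x a i, `|phi h x a i| <= 1.

Lemma measurable_Plr h a :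
  measurable_fun setT (fun z : X * X => Plr phi mus h z.1 a z.2).
Proof.
apply: measurable_sum => i; apply: measurable_funM.
- exact: measurableT_comp (mphi h a i) measurable_fst.
- exact: measurableT_comp (mmus h i) measurable_snd.
Qed.

Lemma Plr_le_sum_abs h x a y : Plr phi mus h x a y <= \sum_(i < dd) `|mus h y i|.
Proof.
apply: ler_sum => i _; apply: le_trans (ler_norm _) _.
by rewrite normrM ler_piMl.
Qed.

Lemma measurable_lin h th : measurable_fun setT (lin (mus h) th).
Proof.
apply: measurable_sum => i; apply: measurable_funM => //; exact: measurable_cst.
Qed.

Lemma Wcls_weight h C w : Wcls (mus h) C w ->
  measurable_fun setT w /\ forall x, 0 <= w x <= C.
Proof.
move=> [[thu [thd wE]] wb]; split; last first.
  by move=> x; have [w0 wC] := wb x; rewrite w0 (le_trans (ler_norm _) wC).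
rewrite (_ : w = fun x => lin (mus h) thu x / lin (mus h) thd x); last exact/funext.
by apply: measurable_funM; [exact: measurable_lin | exact/measurable_funV/measurable_lin].
Qed.

End low_rank.

Lemma FclsIdx_density d (X : measurableType d) (R : realType)
  (mu : {measure set X -> \bar R}) dd (mus : nat -> X -> 'I_dd -> R) k f :
  FclsIdx mu mus k f -> is_density mu f.
Proof. by case: k => [|k] //= []. Qed.

Section dbar.
Context {dX : measure_display} {X : measurableType dX} {R : realType}.
Variables (mu : {sigma_finite_measure set X -> \bar R}) (A : finType).
Variables (P : nat -> X -> A -> X -> R) (S : nat -> X -> R).
Hypothesis P0 : forall h x a y, 0 <= P h x a y.
Hypothesis mP : forall h a, measurable_fun setT (fun z : X * X => P h z.1 a z.2).
Hypothesis PS : forall h x a y, P h x a y <= S h y.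
Hypothesis P1 : forall h x a, (\int[mu]_y (P h x a y)%:E = 1)%E.

Lemma nonneg_integrable_dbar (pi piD : nat -> X -> A -> R) (Cx Ca : nat -> R)
    (d0 : X -> R) (dD : nat -> X -> R) :
  (forall h, subpolicy (pi h)) -> (forall h, subpolicy (piD h)) ->
  (forall h, 0 <= Cx h) -> (forall h, 0 <= Ca h) ->
  nonneg_integrable mu d0 -> (forall h, nonneg_integrable mu (dD h)) ->
  forall h, nonneg_integrable mu (dbar mu P pi piD Cx Ca d0 dD h).
Proof.
move=> hpi hpiD Cx0 Ca0 hd0 hdD; elim=> [//|h IH] /=.
apply: (nonneg_integrable_Pop (P0 h) (mP h) (PS h) (P1 h)).
- exact: subpolicy_clipPol.
- exact/nonneg_integrable_minr/nonneg_integrableZ.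
Qed.

End dbar.

Theorem lemma1 (dX : measure_display) (X : measurableType dX) (R : realType)
  (mu : {sigma_finite_measure set X -> \bar R}) (A : finType)
  (H dd : nat)
  (phi : nat -> X -> A -> 'I_dd -> R) (mus : nat -> X -> 'I_dd -> R) (Bmu : R)
  (d0 : X -> R) (pi piD : nat -> X -> A -> R) (Cx Ca : nat -> R)
  (dD : nat -> X -> R)
  (Dmle Dreg : nat -> seq (X * A * X))
  (dDhat dDdaghat what dhat : nat -> X -> R) :
  (* low-rank MDP *)
  (forall h a i, measurable_fun setT (fun x => phi h x a i)) ->
  (forall h i, measurable_fun setT (fun x => mus h x i)) ->
  (forall h x a i, `|phi h x a i| <= 1) ->
  (forall h, (\int[mu]_x (\sum_(i < dd) `|mus h x i|)%:E <= Bmu%:E)%E) ->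
  (forall h x a x', 0 <= Plr phi mus h x a x') ->
  (forall h x a, (\int[mu]_x' (Plr phi mus h x a x')%:E = 1)%E) ->
  (* initial distribution, policies, offline marginals, clipping constants *)
  is_density mu d0 ->
  (forall h, is_policy (pi h)) ->
  (forall h, is_policy (piD h)) ->
  (forall h, is_density mu (dD h)) ->
  (forall h, 0 <= Cx h) -> (forall h, 0 <= Ca h) ->
  (* FORC, iterations h = k.+1 = 1, ..., H *)
  dhat 0%N = d0 ->
  (forall k, (k < H)%N ->
     FclsIdx mu mus k (dDhat k) /\
     (forall f, FclsIdx mu mus k f ->
        \prod_(t <- Dmle k) f t.1.1 <= \prod_(t <- Dmle k) dDhat k t.1.1)) ->
  (forall k, (k < H)%N ->
     Fcls mu (mus k) (dDdaghat k) /\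
     (forall f, Fcls mu (mus k) f ->
        \prod_(t <- Dmle k) f t.2 <= \prod_(t <- Dmle k) dDdaghat k t.2)) ->
  (forall k, (k < H)%N ->
     Wcls (mus k) (Cx k * Ca k) (what k.+1) /\
     (forall w, Wcls (mus k) (Cx k * Ca k) w ->
        regLoss (Dreg k) (wtil (Cx k) (dhat k) (dDhat k))
          (clipPol (pi k) (piD k) (Ca k)) (piD k) (what k.+1)
        <= regLoss (Dreg k) (wtil (Cx k) (dhat k) (dDhat k))
          (clipPol (pi k) (piD k) (Ca k)) (piD k) w)) ->
  (forall k, (k < H)%N -> dhat k.+1 = (fun x => what k.+1 x * dDdaghat k x)) ->
  (* conclusion, for h = k.+1 in {1, ..., H-1} *)
  let dDdag := fun k => Pop mu (Plr phi mus k) (piD k) (dD k) in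
  let db := dbar mu (Plr phi mus) pi piD Cx Ca d0 dD in
  forall k, (k.+1 < H)%N ->
  (L1 mu (fun x => dhat k.+1 x - db k.+1 x)%R
   <= L1 mu (fun x => dhat k x - db k x)%R
      + (2 * Cx k)%R%:E * L1 mu (fun x => dDhat k x - dD k x)%R
      + (Cx k * Ca k)%R%:E * L1 mu (fun x => dDdaghat k x - dDdag k x)%R
      + (Num.sqrt 2)%:E *
        L2w mu (dDdag k)
          (fun x => what k.+1 x
             - Eop mu (Plr phi mus k) (clipPol (pi k) (piD k) (Ca k)) (dDdag k)
                 (fun y => dD k y * wtil (Cx k) (dhat k) (dDhat k) y) x)%R)%E.
Proof.
move=> mphi mmus phi1 _ P0 P1 dens0 hpi hpiD hdD Cx0 Ca0 dhat0 hFmle hFdag hW dhatS.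
move=> dDdag db k hk; have hkH : (k < H)%N by exact: ltnW.
have mPlr := measurable_Plr mphi mmus; have PlrS := Plr_le_sum_abs mus phi1.
have spi h := is_policy_subpolicy (hpi h); have spiD h := is_policy_subpolicy (hpiD h).
have hdb := nonneg_integrable_dbar P0 mPlr PlrS P1 spi spiD Cx0 Ca0
  (is_density_nonneg_integrable dens0) (fun h => is_density_nonneg_integrable (hdD h)).
have [mw w0C] := Wcls_weight mmus (proj1 (hW k hkH)).
have dens_dDhat := FclsIdx_density (proj1 (hFmle k hkH)).
have [_ dens_dDdaghat] := proj1 (hFdag k hkH).
have hdhat : nonneg_integrable mu (dhat k).
  case: k hk hkH {mw w0C dens_dDhat dens_dDdaghat} => [|j] hk hkH.
    by rewrite dhat0; exact: is_density_nonneg_integrable.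
  have hjH : (j < H)%N by exact: ltnW.
  have [mwj w0Cj] := Wcls_weight mmus (proj1 (hW j hjH)).
  rewrite (dhatS j hjH); apply: (nonneg_integrableM (mulr_ge0 (Cx0 j) (Ca0 j)) mwj w0Cj).
  exact/is_density_nonneg_integrable/(proj2 (proj1 (hFdag j hjH))).
rewrite (dhatS k hkH) /db /dDdag /=.
apply: (L1_error_step_le (P0 k) (mPlr k) (PlrS k) (P1 k)) => //.
- exact: is_density_nonneg_integrable.
- by case: dens_dDdaghat.
Qed.
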